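(* The Fermat–Torricelli problem for four non-coplanar points forming a tetrahedron in $\mathbb{R}^3$ is not in general solvable by Euclidean (straightedge-and-compass) constructions: there exist tetrahedra $A_1A_2A_3A_4$ in $\mathbb{R}^3$ whose Fermat–Torricelli point $A_0$ (the minimizer of $\sum_{i=1}^4\|A_0-A_i\|$) cannot be constructed from the vertices by a Euclidean construction, i.e. (for vertices with rational coordinates) some coordinate of $A_0$ is not a constructible number over $\mathbb{Q}$.
   Context: A real number is constructible over $\mathbb{Q}$ if it lies in a field obtained from $\mathbb{Q}$ by a finite tower of quadratic extensions; a point is constructible by Euclidean constructions from given points with rational coordinates exactly when its coordinates are constructible numbers. The Fermat–Torricelli point of four points $A_1,\dots,A_4\in\mathbb{R}^3$ is the unique minimizer over $A_0\in\mathbb{R}^3$ of $\sum_{i=1}^4\|A_0-A_i\|$. *)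

From Stdlib Require Import Reals QArith Qreals List.
Open Scope R_scope.

Record point3 := P3 { px : R; py : R; pz : R }.

Definition dist3 (a b : point3) : R :=
  sqrt ((px a - px b)^2 + (py a - py b)^2 + (pz a - pz b)^2).

Definition is_rational (x : R) : Prop := exists q : Q, Q2R q = x.

Definition rational_point (a : point3) : Prop :=
  is_rational (px a) /\ is_rational (py a) /\ is_rational (pz a).

Definition det3 (u v w : point3) : R :=
  px u * (py v * pz w - pz v * py w)
  - py u * (px v * pz w - pz v * px w)
  + pz u * (px v * py w - py v * px w).

Definition sub3 (a b : point3) : point3 :=
  P3 (px a - px b) (py a - py b) (pz a - pz b).

Definition non_coplanar (a1 a2 a3 a4 : point3) : Prop :=
  det3 (sub3 a2 a1) (sub3 a3 a1) (sub3 a4 a1) <> 0.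

Definition ft_sum (a1 a2 a3 a4 a0 : point3) : R :=
  dist3 a0 a1 + dist3 a0 a2 + dist3 a0 a3 + dist3 a0 a4.

Definition is_FT_point (a1 a2 a3 a4 a0 : point3) : Prop :=
  forall b : point3, ft_sum a1 a2 a3 a4 a0 <= ft_sum a1 a2 a3 a4 b.

Inductive in_gen_field (S : list R) : R -> Prop :=
| gf_rat : forall q : Q, in_gen_field S (Q2R q)
| gf_gen : forall a, In a S -> in_gen_field S a
| gf_add : forall x y, in_gen_field S x -> in_gen_field S y -> in_gen_field S (x + y)
| gf_opp : forall x, in_gen_field S x -> in_gen_field S (- x)
| gf_mul : forall x y, in_gen_field S x -> in_gen_field S y -> in_gen_field S (x * y)
| gf_inv : forall x, in_gen_field S x -> x <> 0 -> in_gen_field S (/ x).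

(* A list [a_1; ...; a_n] is a quadratic tower over Q when each a_k^2 lies in
   Q(a_1,...,a_{k-1}); then each step Q(a_1..a_{k-1}) ⊆ Q(a_1..a_k) has degree <= 2. *)
Fixpoint quadratic_tower_aux (prev : list R) (s : list R) : Prop :=
  match s with
  | nil => True
  | a :: s' => in_gen_field prev (a * a) /\ quadratic_tower_aux (prev ++ a :: nil) s'
  end.

Definition quadratic_tower (s : list R) : Prop := quadratic_tower_aux nil s.

Definition constructible (x : R) : Prop :=
  exists s : list R, quadratic_tower s /\ in_gen_field s x.

Definition constructible_point (a : point3) : Prop :=
  constructible (px a) /\ constructible (py a) /\ constructible (pz a).

(* Take A1 = (0,0,0), A2 = (2,0,0), A3 = (0,2,2), A4 = (0,2,-2) and let x be the
   root in [2/5, 9/20] of the cubic  2x^3 - 4x^2 - x + 1.  The proof has three parts.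

   In a quadratic extension K(a), a^2 in K, every element is p + r a
      with p, r in K.  If a root of the cubic lies in K(a), then some root lies in K
      (either r = 0, or a itself lies in K, or the conjugate p - r a is a root too and
      the third root 2 - 2p lies in K).  Descending a quadratic tower gives a rational
      root, which the rational root theorem excludes: no root is constructible.
   2. Analysis.  A point P distinct from the vertices whose unit vectors towards P sum
      to zero ("balanced") minimizes the sum of distances, since each term |B - Ai|
      dominates its linearization at P (Cauchy–Schwarz).  If moreover two of these
      unit vectors are not parallel, P is the only minimizer.
   3. Computation.  P = (x, 1-x, 0) is balanced for the tetrahedron above exactly
      because x is a root of the cubic, so P is its unique Fermat–Torricelli point,
      and its first coordinate x is not constructible. *)

From Stdlib Require Import Reals QArith Qreals List.
From Stdlib Require Import Lra Lia Psatz.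
From Stdlib Require QArith.Qcanon.
Open Scope R_scope.

(** * Quadratic towers and the cubic 2z^3 - 4z^2 - z + 1 *)

Definition cubic (z : R) : R := 2*z*z*z - 4*z*z - z + 1.

Lemma gen_field_nil_rational (z : R) : in_gen_field nil z -> exists q, z = Q2R q.
Proof.
  induction 1 as [q|a Ha|x y _ [q1 ->] _ [q2 ->]|x _ [q ->]|x y _ [q1 ->] _ [q2 ->]
                 |x _ [q ->] Hx].
  - exists q; reflexivity.
  - destruct Ha.
  - exists (q1 + q2)%Q; symmetry; apply Q2R_plus.
  - exists (- q)%Q; symmetry; apply Q2R_opp.
  - exists (q1 * q2)%Q; symmetry; apply Q2R_mult.
  - exists (/ q)%Q. rewrite Q2R_inv; [reflexivity|].
    intro Hq. apply Hx. rewrite (Qeq_eqR _ _ Hq). unfold Q2R; simpl; lra.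
Qed.

Lemma gen_field_IZR (S : list R) (n : Z) : in_gen_field S (IZR n).
Proof.
  replace (IZR n) with (Q2R (inject_Z n)) by (unfold Q2R; simpl; field).
  apply gf_rat.
Qed.

(* Closure of a generated field under the field operations (divisors must be
   known to be nonzero by hypothesis). *)
Ltac solve_gen_field := first
  [ assumption
  | apply gen_field_IZR
  | match goal with
    | |- in_gen_field _ (_ + _) => apply gf_add; solve_gen_field
    | |- in_gen_field _ (_ * _) => apply gf_mul; solve_gen_field
    | |- in_gen_field _ (- _) => apply gf_opp; solve_gen_field
    | |- in_gen_field _ (_ - _) =>
        unfold Rminus; apply gf_add; [solve_gen_field | apply gf_opp; solve_gen_field]
    | |- in_gen_field _ (_ / _) =>
        unfold Rdiv; apply gf_mul; [solve_gen_field | apply gf_inv; [solve_gen_field | assumption]]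
    | |- in_gen_field _ (/ _) => apply gf_inv; [solve_gen_field | assumption]
    end ].

Section QuadraticExtension.

Variables (K : list R) (a : R).
Hypothesis a_sq_in_K : in_gen_field K (a * a).

(* An element p + r a is inverted inside K(a): either its norm p^2 - r^2 a^2 is
   nonzero, giving the usual conjugate formula, or a itself lies in K. *)
Lemma quadratic_inverse (p r : R) :
  in_gen_field K p -> in_gen_field K r -> p + r*a <> 0 ->
  exists p' r', in_gen_field K p' /\ in_gen_field K r' /\ / (p + r*a) = p' + r'*a.
Proof.
  intros Hp Hr Hnz.
  destruct (Req_dec (p*p - r*r*(a*a)) 0) as [Hnorm|Hnorm].
  - assert (Hr0 : r <> 0).
    { intro Hr0. subst r. apply Hnz. assert (p = 0) by nra. subst p. ring. }
    assert (Ha : in_gen_field K a).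
    { assert (Hroots : (a - p/r) * (a + p/r) = 0).
      { replace ((a - p/r) * (a + p/r)) with (- (p*p - r*r*(a*a)) / (r*r))
          by (field; exact Hr0).
        rewrite Hnorm. field; exact Hr0. }
      apply Rmult_integral in Hroots as [E|E].
      - replace a with (p/r) by lra. solve_gen_field.
      - replace a with (- (p/r)) by lra. solve_gen_field. }
    exists (/ (p + r*a)), 0. repeat split; try solve_gen_field. ring.
  - exists (p / (p*p - r*r*(a*a))), (- r / (p*p - r*r*(a*a))).
    repeat split; try solve_gen_field.
    field. split; [exact Hnorm|].
    intro Hc. apply Hnorm. replace (p*p - r*r*(a*a)) with ((p + r*a) * (p - r*a)) by ring.
    rewrite Hc; ring.
Qed.

Lemma quadratic_normal_form (z : R) :
  in_gen_field (K ++ a :: nil) z ->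
  exists p r, in_gen_field K p /\ in_gen_field K r /\ z = p + r*a.
Proof.
  induction 1 as [q|b Hb|x y _ [p1 [r1 [Hp1 [Hr1 ->]]]] _ [p2 [r2 [Hp2 [Hr2 ->]]]]
                 |x _ [p [r [Hp [Hr ->]]]]|x y _ [p1 [r1 [Hp1 [Hr1 ->]]]] _ [p2 [r2 [Hp2 [Hr2 ->]]]]
                 |x _ [p [r [Hp [Hr ->]]]] Hx].
  - exists (Q2R q), 0. repeat split; [apply gf_rat | apply gen_field_IZR | ring].
  - apply in_app_or in Hb as [Hb|[<-|[]]].
    + exists b, 0. repeat split; [apply gf_gen; exact Hb | apply gen_field_IZR | ring].
    + exists 0, 1. repeat split; try apply gen_field_IZR. ring.
  - exists (p1 + p2), (r1 + r2). repeat split; try solve_gen_field. ring.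
  - exists (- p), (- r). repeat split; try solve_gen_field. ring.
  - exists (p1*p2 + r1*r2*(a*a)), (p1*r2 + p2*r1). repeat split; try solve_gen_field. ring.
  - exact (quadratic_inverse p r Hp Hr Hx).
Qed.

(* Writing the root
   as p + r a, cubic (p + r a) = A + r E a with A, E in K; when r E = 0 but r <> 0,
   the conjugate p - r a is also a root and the third root 2 - 2p lies in K. *)
Lemma cubic_root_descends (z : R) :
  in_gen_field (K ++ a :: nil) z -> cubic z = 0 ->
  exists w, in_gen_field K w /\ cubic w = 0.
Proof.
  intros Hz Hroot.
  destruct (quadratic_normal_form z Hz) as [p [r [Hp [Hr ->]]]].
  set (A := 2*(p*p*p + 3*p*r*r*(a*a)) - 4*(p*p + r*r*(a*a)) - p + 1).
  set (E := 6*p*p + 2*r*r*(a*a) - 8*p - 1).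
  assert (HA : in_gen_field K A) by (unfold A; solve_gen_field).
  assert (HE : in_gen_field K E) by (unfold E; solve_gen_field).
  assert (Hsplit : cubic (p + r*a) = A + r*E*a) by (unfold cubic, A, E; ring).
  destruct (Req_dec (r*E) 0) as [HrE|HrE].
  - destruct (Req_dec r 0) as [Hr0|Hr0].
    + exists p. split; [exact Hp|].
      replace p with (p + r*a) by (rewrite Hr0; ring). exact Hroot.
    + assert (HE0 : E = 0) by (apply Rmult_integral in HrE as [|]; [contradiction|assumption]).
      assert (HA0 : A = 0) by (rewrite Hsplit, HrE in Hroot; lra).
      exists (2 - 2*p). split; [solve_gen_field|].
      replace (cubic (2 - 2*p)) with (A - (3*p - 2)*E) by (unfold cubic, A, E; ring).
      rewrite HA0, HE0. ring.
  - assert (Ha : a = - A / (r*E)).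
    { rewrite Hsplit in Hroot.
      replace a with (r*E*a / (r*E)) at 1
        by (field; split; intro H0; apply HrE; rewrite H0; ring).
      replace (r*E*a) with (- A) by lra. reflexivity. }
    exists (p + r*a). split; [|exact Hroot].
    rewrite Ha. solve_gen_field.
Qed.

End QuadraticExtension.

Lemma cubic_root_tower_descent (s K : list R) :
  quadratic_tower_aux K s -> forall z, in_gen_field (K ++ s) z -> cubic z = 0 ->
  exists w, in_gen_field K w /\ cubic w = 0.
Proof.
  revert K. induction s as [|a s IH]; intros K Htower z Hz Hroot.
  - rewrite app_nil_r in Hz. eauto.
  - destruct Htower as [Ha Htower].
    rewrite <- (app_nil_l s), app_comm_cons, app_assoc in Hz.
    destruct (IH _ Htower z Hz Hroot) as [w [Hw Hroot_w]].
    exact (cubic_root_descends K a Ha w Hw Hroot_w).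
Qed.

(* Rational root theorem for the cubic, after clearing denominators: for n/d in
   lowest terms the relation forces n | 1 and d | 2, and none of ±1, ±1/2 is a root. *)
Lemma cubic_no_coprime_integer_root (n d : Z) :
  (0 < d)%Z -> Z.gcd n d = 1%Z ->
  (2*n*n*n - 4*n*n*d - n*d*d + d*d*d <> 0)%Z.
Proof.
  intros Hd Hgcd Hrel.
  assert (Hn : (n | 1)%Z).
  { assert (Hdiv : (n | d*(d*d))%Z) by (exists (-2*n*n + 4*n*d + d*d)%Z; lia).
    do 2 (apply Z.gauss in Hdiv; [|exact Hgcd]).
    rewrite <- Hgcd. apply Z.gcd_greatest; [apply Z.divide_refl | exact Hdiv]. }
  assert (Hd2 : (d | 2)%Z).
  { assert (Hdiv : (d | n*(n*(n*2)))%Z) by (exists (4*n*n + n*d - d*d)%Z; lia).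
    rewrite Z.gcd_comm in Hgcd.
    do 3 (apply Z.gauss in Hdiv; [|exact Hgcd]). exact Hdiv. }
  apply Z.divide_1_r in Hn. apply Z.divide_pos_le in Hd2; [|lia].
  assert (d = 1 \/ d = 2)%Z as [-> | ->] by lia; destruct Hn as [-> | ->]; lia.
Qed.

Lemma cubic_no_rational_root (q : Q) : cubic (Q2R q) <> 0.
Proof.
  intro Hroot.
  rewrite <- (Qeq_eqR _ _ (Qred_correct q)) in Hroot.
  assert (Hgcd : Z.gcd (Qnum (Qred q)) (QDen (Qred q)) = 1%Z)
    by (apply Qcanon.Qred_identity2, Qcanon.Qred_involutive).
  destruct (Qred q) as [n d]. simpl in Hgcd.
  apply (cubic_no_coprime_integer_root n (Z.pos d)); [lia | exact Hgcd |].
  apply eq_IZR. unfold cubic, Q2R in Hroot; simpl in Hroot.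
  assert (Hd : IZR (Z.pos d) <> 0) by (apply not_0_IZR; lia).
  repeat rewrite ?minus_IZR, ?plus_IZR, ?mult_IZR.
  replace 0 with (0 * (IZR (Z.pos d) ^ 3)) by ring. rewrite <- Hroot.
  field. exact Hd.
Qed.

Lemma cubic_root_not_constructible (z : R) : cubic z = 0 -> ~ constructible z.
Proof.
  intros Hroot [s [Htower Hz]].
  destruct (cubic_root_tower_descent s nil Htower z Hz Hroot) as [w [Hw Hroot_w]].
  destruct (gen_field_nil_rational w Hw) as [q ->].
  exact (cubic_no_rational_root q Hroot_w).
Qed.

Lemma cubic_root_exists : { x : R | 2/5 <= x <= 9/20 /\ cubic x = 0 }.
Proof.
  destruct (IVT (fun z => - cubic z) (2/5) (9/20)) as [x [Hx Hroot]];
    unfold cubic in *; [reg | lra | lra | lra |].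
  exists x. split; [exact Hx | lra].
Qed.

(** * Vectors in R^3 and the optimality criterion *)

Definition origin : point3 := P3 0 0 0.
Definition add3 (u v : point3) : point3 := P3 (px u + px v) (py u + py v) (pz u + pz v).
Definition scal (c : R) (v : point3) : point3 := P3 (c * px v) (c * py v) (c * pz v).
Definition dot (u v : point3) : R := px u * px v + py u * py v + pz u * pz v.
Definition cross3 (u v : point3) : point3 :=
  P3 (py u * pz v - pz u * py v) (pz u * px v - px u * pz v) (px u * py v - py u * px v).

Definition unitv (P a : point3) : point3 := scal (/ dist3 P a) (sub3 P a).

(* P is balanced for a1..a4 when the unit vectors from the vertices towards P sum
   to zero: the first-order optimality condition for the sum of distances. *)
Definition balanced (P a1 a2 a3 a4 : point3) : Prop :=
  add3 (add3 (add3 (unitv P a1) (unitv P a2)) (unitv P a3)) (unitv P a4) = origin.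

(* How much |B - a| exceeds its linearization at P in the direction of B. *)
Definition gap (P a b : point3) : R := dist3 b a - dot (unitv P a) (sub3 b a).

Lemma dist3_sq (P a : point3) : dist3 P a * dist3 P a = dot (sub3 P a) (sub3 P a).
Proof.
  unfold dist3, dot, sub3; simpl. rewrite sqrt_sqrt; [ring|].
  pose proof (pow2_ge_0 (px P - px a)). pose proof (pow2_ge_0 (py P - py a)).
  pose proof (pow2_ge_0 (pz P - pz a)). lra.
Qed.

Lemma dist3_nonneg (P a : point3) : 0 <= dist3 P a.
Proof. apply sqrt_pos. Qed.

Lemma dot_add3_l (u v w : point3) : dot (add3 u v) w = dot u w + dot v w.
Proof. unfold dot, add3; simpl; ring. Qed.

Lemma sub3_unitv (P a : point3) : 0 < dist3 P a -> sub3 P a = scal (dist3 P a) (unitv P a).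
Proof.
  intro Hd. unfold unitv, scal; destruct (sub3 P a) as [v1 v2 v3]; simpl.
  f_equal; field; lra.
Qed.

Lemma unitv_norm (P a : point3) : 0 < dist3 P a -> dot (unitv P a) (unitv P a) = 1.
Proof.
  intro Hd. pose proof (dist3_sq P a) as Hsq.
  unfold unitv, scal, dot in *; simpl in *.
  replace 1 with (dist3 P a * dist3 P a / (dist3 P a * dist3 P a)) by (field; lra).
  rewrite Hsq at 1. field. lra.
Qed.

Lemma dot_unit_le_norm (u v : point3) : dot u u = 1 -> dot u v <= sqrt (dot v v).
Proof.
  intro Hu.
  destruct (Rle_or_lt (dot u v) 0) as [Hneg|Hpos]; [pose proof (sqrt_pos (dot v v)); lra|].
  rewrite <- (sqrt_square (dot u v)) by lra. apply sqrt_le_1_alt.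
  assert (Lagrange : dot u u * dot v v - dot u v * dot u v =
    (px u * py v - py u * px v)^2 + (px u * pz v - pz u * px v)^2 +
    (py u * pz v - pz u * py v)^2) by (unfold dot; ring).
  rewrite Hu in Lagrange.
  pose proof (pow2_ge_0 (px u * py v - py u * px v)).
  pose proof (pow2_ge_0 (px u * pz v - pz u * px v)).
  pose proof (pow2_ge_0 (py u * pz v - pz u * py v)). lra.
Qed.

Lemma gap_nonneg (P a b : point3) : 0 < dist3 P a -> 0 <= gap P a b.
Proof.
  intro Hd. unfold gap.
  replace (dist3 b a) with (sqrt (dot (sub3 b a) (sub3 b a)))
    by (unfold dist3, dot, sub3; simpl; f_equal; ring).
  pose proof (dot_unit_le_norm _ (sub3 b a) (unitv_norm P a Hd)). lra.
Qed.

(* Equality in Cauchy–Schwarz: a zero gap means B lies on the ray from a through P. *)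
Lemma gap_zero_on_ray (P a b : point3) :
  0 < dist3 P a -> gap P a b = 0 -> sub3 b a = scal (dist3 b a) (unitv P a).
Proof.
  intros Hd Hgap. unfold gap in Hgap.
  pose proof (unitv_norm P a Hd) as Hu. pose proof (dist3_sq b a) as Hsq.
  set (u := unitv P a) in *. set (v := sub3 b a) in *. set (L := dist3 b a) in *.
  assert (Hzero : (px v - L * px u)^2 + (py v - L * py u)^2 + (pz v - L * pz u)^2 = 0).
  { replace ((px v - L * px u)^2 + (py v - L * py u)^2 + (pz v - L * pz u)^2)
      with (dot v v - 2 * L * dot u v + L * L * dot u u) by (unfold dot; ring).
    rewrite Hu, <- Hsq. replace (dot u v) with L by lra. ring. }
  clearbody u v L.
  pose proof (pow2_ge_0 (px v - L * px u)).
  pose proof (pow2_ge_0 (py v - L * py u)).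
  pose proof (pow2_ge_0 (pz v - L * pz u)).
  destruct v as [v1 v2 v3]. unfold scal; simpl in *.
  f_equal; nra.
Qed.

Lemma scal_eq_origin (c : R) (w : point3) : w <> origin -> scal c w = origin -> c = 0.
Proof.
  intros Hw Hcw. destruct (Req_dec c 0) as [|Hc]; [assumption|].
  exfalso. apply Hw. destruct w as [w1 w2 w3]. unfold scal, origin in *; simpl in *.
  injection Hcw as E1 E2 E3.
  f_equal; [apply (Rmult_eq_reg_l c) | apply (Rmult_eq_reg_l c) | apply (Rmult_eq_reg_l c)];
    lra.
Qed.

(* Two multiples of non-parallel vectors coincide only when both vanish:
   c1 (u x v) = (c1 u) x v = (c2 v) x v = 0, and symmetrically for c2. *)
Lemma non_parallel_scal_eq (u v : point3) (c1 c2 : R) :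
  cross3 u v <> origin -> scal c1 u = scal c2 v -> c1 = 0 /\ c2 = 0.
Proof.
  intros Hcross Heq. split; apply (scal_eq_origin _ (cross3 u v) Hcross).
  - transitivity (cross3 (scal c1 u) v); [unfold scal, cross3; simpl; f_equal; ring|].
    rewrite Heq. unfold scal, cross3, origin; simpl; f_equal; ring.
  - transitivity (cross3 u (scal c2 v)); [unfold scal, cross3; simpl; f_equal; ring|].
    rewrite <- Heq. unfold scal, cross3, origin; simpl; f_equal; ring.
Qed.

Section BalancedPoint.

Variables (P a1 a2 a3 a4 : point3).
Hypotheses (pos1 : 0 < dist3 P a1) (pos2 : 0 < dist3 P a2)
           (pos3 : 0 < dist3 P a3) (pos4 : 0 < dist3 P a4).
Hypothesis P_balanced : balanced P a1 a2 a3 a4.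

(* At a balanced point the linear parts cancel, so the excess of the distance sum
   at B over that at P is exactly the sum of the four gaps. *)
Lemma ft_sum_excess (b : point3) :
  ft_sum a1 a2 a3 a4 b - ft_sum a1 a2 a3 a4 P =
  gap P a1 b + gap P a2 b + gap P a3 b + gap P a4 b.
Proof.
  assert (Hlin : forall a, 0 < dist3 P a ->
            dot (unitv P a) (sub3 b a) = dot (unitv P a) (sub3 b P) + dist3 P a).
  { intros a Ha.
    replace (dot (unitv P a) (sub3 b a))
      with (dot (unitv P a) (sub3 b P) + dot (unitv P a) (sub3 P a))
      by (unfold dot, sub3; simpl; ring).
    rewrite (sub3_unitv P a Ha).
    replace (dot (unitv P a) (scal (dist3 P a) (unitv P a)))
      with (dist3 P a * dot (unitv P a) (unitv P a)) by (unfold dot, scal; simpl; ring).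
    rewrite (unitv_norm P a Ha). ring. }
  assert (Hcancel : dot (add3 (add3 (add3 (unitv P a1) (unitv P a2)) (unitv P a3))
                             (unitv P a4)) (sub3 b P) = 0)
    by (rewrite P_balanced; unfold dot; simpl; ring).
  rewrite !dot_add3_l in Hcancel.
  unfold gap, ft_sum.
  rewrite (Hlin a1 pos1), (Hlin a2 pos2), (Hlin a3 pos3), (Hlin a4 pos4). lra.
Qed.

Lemma balanced_is_FT_point : is_FT_point a1 a2 a3 a4 P.
Proof.
  intro b. pose proof (ft_sum_excess b).
  pose proof (gap_nonneg P a1 b pos1). pose proof (gap_nonneg P a2 b pos2).
  pose proof (gap_nonneg P a3 b pos3). pose proof (gap_nonneg P a4 b pos4). lra.
Qed.

(* Any other minimizer B has zero gaps, so it lies on the rays from a1 and from a2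
   through P; when these rays are not parallel they meet only at P. *)
Lemma balanced_FT_point_unique (b : point3) :
  cross3 (unitv P a1) (unitv P a2) <> origin ->
  is_FT_point a1 a2 a3 a4 b -> b = P.
Proof.
  intros Hcross Hb. specialize (Hb P). pose proof (ft_sum_excess b).
  pose proof (gap_nonneg P a1 b pos1) as G1. pose proof (gap_nonneg P a2 b pos2) as G2.
  pose proof (gap_nonneg P a3 b pos3). pose proof (gap_nonneg P a4 b pos4).
  assert (Hray : forall a, 0 < dist3 P a -> gap P a b = 0 ->
            sub3 b P = scal (dist3 b a - dist3 P a) (unitv P a)).
  { intros a Ha Hgap. pose proof (gap_zero_on_ray P a b Ha Hgap) as Hb_ray.
    pose proof (sub3_unitv P a Ha) as HP_ray.
    set (u := unitv P a) in *. clearbody u. unfold sub3, scal in *. injection Hb_ray as Bx By Bz. injection HP_ray as Px Py Pz.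
    f_equal; lra. }
  pose proof (Hray a1 pos1 ltac:(lra)) as R1. pose proof (Hray a2 pos2 ltac:(lra)) as R2.
  destruct (non_parallel_scal_eq _ _ _ _ Hcross (eq_trans (eq_sym R1) R2)) as [C1 _].
  rewrite C1 in R1. unfold sub3, scal in R1. injection R1 as Ex Ey Ez.
  destruct b, P; simpl in *. f_equal; lra.
Qed.

End BalancedPoint.

(** * The explicit tetrahedron *)

Definition A1 : point3 := P3 0 0 0.
Definition A2 : point3 := P3 2 0 0.
Definition A3 : point3 := P3 0 2 2.
Definition A4 : point3 := P3 0 2 (-2).

Lemma IZR_rational (n : Z) : is_rational (IZR n).
Proof. exists (inject_Z n). unfold Q2R; simpl. field. Qed.

Lemma tetrahedron_rational :
  rational_point A1 /\ rational_point A2 /\ rational_point A3 /\ rational_point A4.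
Proof. repeat split; apply IZR_rational. Qed.

Lemma tetrahedron_non_coplanar : non_coplanar A1 A2 A3 A4.
Proof. unfold non_coplanar, det3, sub3, A1, A2, A3, A4; simpl. lra. Qed.

Section FTPointOfTetrahedron.

Variable x : R.
Hypotheses (x_range : 2/5 <= x <= 9/20) (x_root : cubic x = 0).

Definition ft_point : point3 := P3 x (1 - x) 0.

Let W := dist3 ft_point A2.

Lemma W_sq : W * W = (x-2)*(x-2) + (1-x)*(1-x).
Proof. unfold W; rewrite dist3_sq; unfold dot, sub3, ft_point, A2; simpl; ring. Qed.

Lemma W_pos : 0 < W.
Proof. pose proof W_sq. pose proof (dist3_nonneg ft_point A2) as HW. fold W in HW. nra. Qed.

(* The remaining distances are rational multiples of W; these identities hold
   precisely because x is a root of the cubic. *)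
Lemma dist_A1 : dist3 ft_point A1 = x * W.
Proof.
  pose proof W_pos. unfold dist3. apply sqrt_lem_1; unfold ft_point, A1; simpl; [nra | nra |].
  replace (x * W * (x * W)) with (x * x * (W * W)) by ring. rewrite W_sq.
  replace (x * x * ((x - 2) * (x - 2) + (1 - x) * (1 - x))) with
    ((x-0)^2 + (1-x-0)^2 + (0-0)^2 + (x-1) * cubic x) by (unfold cubic; ring).
  rewrite x_root. ring.
Qed.

Lemma dist_A3 : dist3 ft_point A3 = 2*x*W/(1-x).
Proof.
  pose proof W_pos. unfold dist3. apply sqrt_lem_1; unfold ft_point, A3; simpl.
  - nra.
  - apply Rmult_le_pos; [nra|]. apply Rlt_le, Rinv_0_lt_compat. lra.
  - apply (Rmult_eq_reg_l ((1-x)*(1-x))); [|nra].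
    replace ((1-x)*(1-x) * (2*x*W/(1-x) * (2*x*W/(1-x)))) with (4*x*x*(W*W)) by (field; lra).
    rewrite W_sq.
    replace (4 * x * x * ((x - 2) * (x - 2) + (1 - x) * (1 - x))) with
      ((1 - x) * (1 - x) * ((x - 0) ^ 2 + (1 - x - 2) ^ 2 + (0 - 2) ^ 2) + (3*x - 5) * cubic x)
      by (unfold cubic; ring).
    rewrite x_root. ring.
Qed.

Lemma dist_A4 : dist3 ft_point A4 = 2*x*W/(1-x).
Proof.
  rewrite <- dist_A3. unfold dist3, ft_point, A3, A4; simpl. f_equal. ring.
Qed.

Lemma dist_vertices_pos :
  0 < dist3 ft_point A1 /\ 0 < dist3 ft_point A2 /\
  0 < dist3 ft_point A3 /\ 0 < dist3 ft_point A4.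
Proof.
  pose proof W_pos.
  assert (0 < 2*x*W/(1-x)) by (apply Rdiv_lt_0_compat; nra).
  rewrite dist_A1, dist_A3, dist_A4. fold W. repeat split; nra.
Qed.

Lemma ft_point_balanced : balanced ft_point A1 A2 A3 A4.
Proof.
  pose proof W_pos. unfold balanced, unitv, add3, scal, origin. fold W.
  rewrite dist_A1, dist_A3, dist_A4. unfold ft_point, A1, A2, A3, A4; simpl.
  f_equal; field; lra.
Qed.

Lemma ft_point_rays_non_parallel :
  cross3 (unitv ft_point A1) (unitv ft_point A2) <> origin.
Proof.
  pose proof W_pos. intro Hcross. apply (f_equal pz) in Hcross.
  unfold cross3, unitv, scal, origin in Hcross. fold W in Hcross. rewrite dist_A1 in Hcross.
  unfold ft_point, A1, A2 in Hcross; simpl in Hcross.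
  replace (/ (x * W) * (x - 0) * (/ W * (1 - x - 0)) - / (x * W) * (1 - x - 0) * (/ W * (x - 2)))
    with (2 * (1 - x) / (x * (W * W))) in Hcross by (field; lra).
  assert (0 < 2 * (1 - x) / (x * (W * W))) by (apply Rdiv_lt_0_compat; nra). lra.
Qed.

End FTPointOfTetrahedron.

Theorem mainTheorem3 :
  exists a1 a2 a3 a4 : point3,
    rational_point a1 /\ rational_point a2 /\ rational_point a3 /\ rational_point a4 /\
    non_coplanar a1 a2 a3 a4 /\
    (exists a0 : point3, is_FT_point a1 a2 a3 a4 a0) /\
    (forall a0 : point3, is_FT_point a1 a2 a3 a4 a0 -> ~ constructible_point a0).
Proof.
  destruct cubic_root_exists as [x [Hx Hroot]].
  destruct (dist_vertices_pos x Hx Hroot) as [pos1 [pos2 [pos3 pos4]]].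
  pose proof (ft_point_balanced x Hx Hroot) as Hbal.
  exists A1, A2, A3, A4.
  split; [|split; [|split; [|split]]]; try apply tetrahedron_rational.
  split; [exact tetrahedron_non_coplanar|].
  split.
  - exists (ft_point x). exact (balanced_is_FT_point _ _ _ _ _ pos1 pos2 pos3 pos4 Hbal).
  - intros a0 Hft [Hconstr _].
    assert (Ha0 : a0 = ft_point x)
      by exact (balanced_FT_point_unique _ _ _ _ _ pos1 pos2 pos3 pos4 Hbal a0
                  (ft_point_rays_non_parallel x Hx Hroot) Hft).
    rewrite Ha0 in Hconstr. exact (cubic_root_not_constructible x Hroot Hconstr).
Qed.
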